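(* Let $G=(K\cup I,E)$ be a split graph and $(V,\mathcal{F})$ the split graph vertex shelling antimatroid defined on $G$. Then for every $i\in I$, $$\mathcal{F}_i=\{\operatorname{fos}(i)\cup H:\ H \text{ is a filter of } (\operatorname{ufs}(i),\prec),\ H\cap K\neq\varnothing\}.$$
   Context: A split graph $G=(K\cup I,E)$ is a finite simple graph whose vertex set $V=K\cup I$ comes with a fixed partition into a clique $K$ and an independent set $I$. We write $u\sim v$ for adjacency; for $F\subseteq V$, $N(F)$ is the set of vertices of $V\setminus F$ adjacent to some vertex of $F$, and $N(v)=N(\{v\})$. A vertex is simplicial if its neighbours induce a clique. The split graph vertex shelling antimatroid of $G$ is $(V,\mathcal{F})$ where $F\subseteq V$ is feasible iff there is an ordering $f_1,\dots,f_{|F|}$ of $F$ such that each $f_j$ is simplicial in $G$ minus $\{f_1,\dots,f_{j-1}\}$ (the empty set is feasible). For $i\in I$, $\mathcal{F}_i$ is the family of feasible sets $F$ with $i\in N(F)$. Define $\operatorname{fos}(i)=\{k\in K: k\not\sim i\}\cup\{i'\in I: N(i')\not\subseteq N(i)\}$ and $\operatorname{ufs}(i)=V\setminus(\operatorname{fos}(i)\cup\{i\})=\big(\{k\in K:k\sim i\}\cup\{i'\in I: N(i')\subseteq N(i)\}\big)\setminus\{i\}$. The strict order $\prec$ on $K\cup I$ is $u\prec v$ iff $u\in K$, $v\in I$, $u\sim v$; $(\operatorname{ufs}(i),\prec)$ is its restriction to $\operatorname{ufs}(i)$. A filter of a poset is a subset $H$ such that $a\in H$ and $a\prec b$ imply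 $b\in H$. *)

From mathcomp Require Import all_boot.
Set Implicit Arguments. Unset Strict Implicit. Unset Printing Implicit Defensive.

Section SplitGraph.
Variables (T : finType) (e : rel T) (K : {set T}).
(* The independent part is I := ~: K. *)

Definition is_split_graph : Prop :=
  symmetric e /\ irreflexive e /\
  (forall u v, u \in K -> v \in K -> u != v -> e u v) /\
  (forall u v, u \notin K -> v \notin K -> ~~ e u v).

Definition nbh (F : {set T}) : {set T} :=
  [set v | (v \notin F) && [exists u in F, e u v]].

Definition nbh1 (v : T) : {set T} := nbh [set v].

Definition simplicial_in (S : {set T}) (v : T) : bool :=
  (v \notin S) &&
  [forall a, forall b,
     ((a \notin S) && (b \notin S) && e v a && e v b && (a != b)) ==> e a b].

Definition feasible (F : {set T}) : Prop :=
  exists s : seq T, [/\ uniq s, [set x in s] = F &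
    forall (s1 s2 : seq T) (x : T), s = s1 ++ x :: s2 ->
      simplicial_in [set y in s1] x].

Definition Fam (i : T) (F : {set T}) : Prop := feasible F /\ i \in nbh F.

Definition fos (i : T) : {set T} :=
  [set k in K | ~~ e k i] :|: [set i' in ~: K | ~~ (nbh1 i' \subset nbh1 i)].

Definition ufs (i : T) : {set T} := ~: (fos i :|: [set i]).

Definition prec (u v : T) : bool := [&& u \in K, v \notin K & e u v].

Definition is_filter (P H : {set T}) : bool :=
  (H \subset P) &&
  [forall a in P, forall b in P, ((a \in H) && prec a b) ==> (b \in H)].
End SplitGraph.

From mathcomp Require Import all_boot.
Set Implicit Arguments. Unset Strict Implicit. Unset Printing Implicit Defensive.

(* A shelling order of F can be replaced by any ranking of F in which each
   vertex is simplicial once the strictly lower-ranked ones are removed.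
   If F is feasible and some k in F is adjacent to i, then k is a clique vertex
   and, when k is shelled, i is still present: so every clique vertex not
   adjacent to i must already be gone, and so must every independent vertex x
   seeing such a clique vertex v (otherwise x and i would both remain as
   independent neighbours of k, once x ~ k is forced by shelling v).  The same
   argument shows F :\: fos i is upward closed.  Conversely fos i :|: H is
   shelled by removing independent vertices first, then clique vertices not
   adjacent to i, then those adjacent to i; the filter property of H is what
   makes the last phase simplicial. *)

Section Shelling.
Variables (T : finType) (e : rel T).

Lemma simplicial_in_edge (S : {set T}) v a b : simplicial_in e S v ->
  a \notin S -> b \notin S -> e v a -> e v b -> a != b -> e a b.
Proof.
case/andP=> _ /forallP simp aS bS va vb ab.
by move/forallP/(_ b)/implyP: (simp a); apply; rewrite aS bS va vb ab.
Qed.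

Lemma simplicial_in_subset (S S' : {set T}) v : S \subset S' -> v \notin S' ->
  simplicial_in e S v -> simplicial_in e S' v.
Proof.
move=> sSS' vS' simp; rewrite /simplicial_in vS'.
apply/forallP=> a; apply/forallP=> b.
apply/implyP=> /andP[/andP[/andP[/andP[aS' bS'] va] vb] ab].
have notin_S c : c \notin S' -> c \notin S by apply: contra; apply: (subsetP sSS').
exact: simplicial_in_edge simp (notin_S a aS') (notin_S b bS') va vb ab.
Qed.

Lemma feasibleP (F : {set T}) : feasible e F <->
  exists r : T -> nat, {in F, forall x, simplicial_in e [set y in F | r y < r x] x}.
Proof.
split=> [[s [_ sF shell]] | [r simp]].
  exists (index^~ s) => x xF /=; have xs : x \in s by move: xF; rewrite -sF inE.
  have -> : [set y in F | index y s < index x s] = [set y in take (index x s) s].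
    apply/setP=> y; rewrite !inE -sF inE.
    case: (boolP (y \in s)) => ys; first by rewrite in_take.
    by apply/esym/negbTE; apply: contra ys; apply: mem_take.
  apply: (shell _ (drop (index x s).+1 s)).
  by rewrite -{1}(cat_take_drop (index x s) s) (drop_nth x) ?index_mem ?nth_index.
pose le := relpre r leq.
have le_tr : transitive le by move=> ? ? ? /=; apply: leq_trans.
exists (sort le (enum F)); split; first by rewrite sort_uniq enum_uniq.
  by apply/setP=> x; rewrite inE mem_sort mem_enum.
move=> s1 s2 x sE.
have mem_sF y : (y \in s1 ++ x :: s2) = (y \in F) by rewrite -sE mem_sort mem_enum.
have xF : x \in F by rewrite -mem_sF mem_cat mem_head orbT.
have : pairwise le (s1 ++ x :: s2).
  by rewrite -sE -sorted_pairwise // sort_sorted // => a b; apply: leq_total.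
rewrite pairwise_cat pairwise_cons => /and3P[_ _ /andP[rx_s2 _]].
apply: simplicial_in_subset (simp x xF).
  apply/subsetP=> y; rewrite !inE -mem_sF mem_cat in_cons => /andP[].
  case/or3P=> // [/eqP -> | ys2]; first by rewrite ltnn.
  by rewrite ltnNge (allP rx_s2 y ys2 : r x <= r y).
have : uniq (s1 ++ x :: s2) by rewrite -sE sort_uniq enum_uniq.
by rewrite cat_uniq inE => /and3P[_ /hasPn/(_ x (mem_head _ _)) /= ->].
Qed.

Lemma is_filterP (K P H : {set T}) : reflect
  (H \subset P /\ {in P &, forall a b, a \in H -> prec e K a b -> b \in H})
  (is_filter e K P H).
Proof.
apply: (iffP andP) => [[-> /forallP filt] | [-> filt]]; split=> //.
  move=> a b aP bP aH ab.
  by move/implyP/(_ aP)/forallP/(_ b)/implyP/(_ bP)/implyP: (filt a); apply; rewrite aH.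
apply/forallP=> a; apply/implyP=> aP; apply/forallP=> b; apply/implyP=> bP.
by apply/implyP=> /andP[]; apply: filt.
Qed.

Lemma in_nbh1 x v : irreflexive e -> (v \in nbh1 e x) = e x v.
Proof.
move=> irr; rewrite /nbh1 /nbh !inE.
case: eqP => [->|_] /=; first by rewrite irr.
apply/existsP/idP => [[u /andP[]]|exv]; first by rewrite inE => /eqP ->.
by exists x; rewrite inE eqxx.
Qed.

Variable K : {set T}.
Hypothesis split_graph : is_split_graph e K.

Let e_sym : symmetric e. Proof. by case: split_graph. Qed.
Let e_irr : irreflexive e. Proof. by case: split_graph => _ []. Qed.
Let clique_edge u v : u \in K -> v \in K -> u != v -> e u v.
Proof. by case: split_graph => _ [_ [clique _]]; apply: clique. Qed.
Let indep_nonedge u v : u \notin K -> v \notin K -> ~~ e u v.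
Proof. by case: split_graph => _ [_ [_ indep]]; apply: indep. Qed.

Lemma nbr_of_indep u v : e u v -> v \notin K -> u \in K.
Proof. by move=> uv vI; apply: contraLR uv => uI; apply: indep_nonedge. Qed.

Lemma simplicial_indep (S : {set T}) v : v \notin K -> v \notin S -> simplicial_in e S v.
Proof.
move=> vI vS; rewrite /simplicial_in vS; apply/forallP=> a; apply/forallP=> b.
apply/implyP=> /andP[/andP[/andP[_ va] vb] ab].
by apply: clique_edge ab; apply: nbr_of_indep vI; rewrite e_sym.
Qed.

Lemma simplicial_indep_nbrs (S : {set T}) v a b : simplicial_in e S v ->
  a \notin K -> b \notin K -> a \notin S -> b \notin S -> e v a -> e v b -> a = b.
Proof.
move=> simp aI bI aS bS va vb; apply/eqP/negPn/negP => ab.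
by move: (indep_nonedge aI bI); rewrite (simplicial_in_edge simp aS bS va vb ab).
Qed.

Variable i : T.
Hypothesis iI : i \notin K.

Lemma fos_clique a : a \in K -> (a \in fos e K i) = ~~ e a i.
Proof. by move=> aK; rewrite /fos !inE aK orbF. Qed.

Lemma fos_indep a : a \notin K ->
  (a \in fos e K i) = ~~ [forall v, e a v ==> e i v].
Proof.
move=> aI; rewrite /fos !inE (negbTE aI) /=; congr (~~ _).
apply/subsetP/forallP => [sub v | sub v]; rewrite ?in_nbh1 //.
  by apply/implyP=> av; have := sub v; rewrite !in_nbh1 //; apply.
by move/(implyP (sub v)).
Qed.

Lemma in_ufs x : (x \in ufs e K i) = (x \notin fos e K i) && (x != i).
Proof. by rewrite /ufs !inE negb_or. Qed.

Lemma self_notin_fos : i \notin fos e K i.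
Proof. by rewrite fos_indep // negbK; apply/forallP=> v; apply/implyP. Qed.

Lemma ufs_clique_adj a : a \in K -> a \in ufs e K i -> e a i.
Proof. by move=> aK; rewrite in_ufs fos_clique // negbK => /andP[]. Qed.

Section Necessity.
Variables (F : {set T}) (r : T -> nat).
Hypothesis shell : {in F, forall x, simplicial_in e [set y in F | r y < r x] x}.
Hypothesis iF : i \notin F.
Let below y := [set z in F | r z < r y].
Let notin_below y z : z \notin F -> z \notin below y.
Proof. by rewrite inE => /negbTE ->. Qed.

Lemma feasible_upper_filter : is_filter e K (ufs e K i) (F :\: fos e K i).
Proof.
apply/is_filterP; split=> [|a b aU bU].
  apply/subsetP=> x; rewrite in_setD in_ufs => /andP[-> xF] /=.
  by apply: contraNneq iF => <-.
rewrite in_setD => /andP[_ aF] /and3P[aK bI ab].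
move: (bU); rewrite in_setD in_ufs => /andP[-> bi]; apply/idPn => bF.
have := simplicial_indep_nbrs (shell aF) iI bI (notin_below a iF)
  (notin_below a bF) (ufs_clique_adj aK aU) ab.
by move/eqP; rewrite eq_sym (negbTE bi).
Qed.

Variable k : T.
Hypotheses (kF : k \in F) (eki : e k i).

Let kK : k \in K. Proof. exact: nbr_of_indep eki iI. Qed.

Lemma nonadj_clique_below v : v \in K -> ~~ e v i -> v \in below k.
Proof.
move=> vK nvi; apply/negPn/negP => vk.
have kv : k != v by apply: contraNneq nvi => <-.
have iv : i != v by apply: contraNneq iI => ->.
have := simplicial_in_edge (shell kF) (notin_below k iF) vk eki.
by rewrite (e_sym i v) (negbTE nvi) => /(_ (clique_edge kK vK kv) iv).
Qed.

Lemma fos_sub_feasible : fos e K i \subset F.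
Proof.
apply/subsetP=> x; case: (boolP (x \in K)) => [xK | xI].
  by rewrite fos_clique // => /(nonadj_clique_below xK); rewrite inE => /andP[].
rewrite fos_indep // => /forallPn[v]; rewrite negb_imply e_sym => /andP[vx niv].
have vK : v \in K by apply: nbr_of_indep vx xI.
have nvi : ~~ e v i by rewrite e_sym.
have /[!inE] /andP[vF rvk] := nonadj_clique_below vK nvi.
apply/idPn => xF.
have kv : k \notin below v by rewrite inE kF -leqNgt ltnW.
have xk : x != k by apply: contraNneq xI => ->.
have vk : e v k by apply: clique_edge => //; apply: contraNneq niv => ->; rewrite e_sym.
have exk := simplicial_in_edge (shell vF) (notin_below v xF) kv vx vk xk.
have ix : i != x by apply: contraNneq niv => ->; rewrite e_sym.
have ekx : e k x by rewrite e_sym.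
have := simplicial_indep_nbrs (shell kF) iI xI (notin_below k iF)
  (notin_below k xF) eki ekx.
by move/eqP; rewrite (negbTE ix).
Qed.

End Necessity.

Lemma Fam_filter (F : {set T}) : Fam e i F -> exists H : {set T},
  [/\ is_filter e K (ufs e K i) H, H :&: K != set0 & F = fos e K i :|: H].
Proof.
case=> /feasibleP[r shell]; rewrite /nbh inE => /andP[iF /existsP[k /andP[kF eki]]].
exists (F :\: fos e K i); split; first exact: feasible_upper_filter shell iF.
  have kK := nbr_of_indep eki iI.
  by apply/set0Pn; exists k; rewrite in_setI in_setD fos_clique // eki kF kK.
rewrite setDE setUIr setUCr setIT.
by apply/esym/setUidPr/(fos_sub_feasible shell iF kF eki).
Qed.

Definition shell_rank x : nat := if x \in K then (if e x i then 2 else 1) else 0.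

Section Sufficiency.
Variable H : {set T}.
Hypothesis filtH : is_filter e K (ufs e K i) H.

Let F := fos e K i :|: H.

Lemma self_notin_fos_filter : i \notin F.
Proof.
rewrite in_setU negb_or self_notin_fos; apply: contraTN isT => iH.
by case/is_filterP: filtH => /subsetP/(_ i iH); rewrite in_ufs eqxx andbF.
Qed.

Lemma indep_nbr_outside_eq_self x c : x \in K -> x \in F ->
  e x c -> c \notin K -> c \notin F -> (c = i) /\ e x i.
Proof.
move=> xK xF xc cI; rewrite in_setU negb_or => /andP[cf cH].
have exi : e x i.
  move: cf; rewrite fos_indep // negbK (e_sym x) => /forallP/(_ x)/implyP.
  by apply; rewrite e_sym.
split=> //; apply/eqP/negPn/negP => ci.
have xf : x \notin fos e K i by rewrite fos_clique // exi.
have xH : x \in H by move: xF; rewrite in_setU (negbTE xf).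
case/is_filterP: filtH => _ /(_ x c); rewrite !in_ufs xf cf ci.
have -> : x != i by apply: contraNneq iI => <-.
by move/(_ isT isT xH); rewrite /prec xK cI xc (negbTE cH) => /(_ isT).
Qed.

Lemma shell_rank_simplicial :
  {in F, forall x, simplicial_in e [set y in F | shell_rank y < shell_rank x] x}.
Proof.
move=> x xF; set S := [set _ in _ | _].
have xS : x \notin S by rewrite inE ltnn andbF.
case: (boolP (x \in K)) => xK; last exact: simplicial_indep.
have indep_out c : c \notin K -> c \notin S -> e x c -> (c = i) /\ e x i.
  move=> cI cS xc; apply: (indep_nbr_outside_eq_self xK xF xc cI).
  by apply: contra cS => cF; rewrite inE cF /shell_rank (negbTE cI) xK; case: ifP.
have mixed c d : c \notin K -> d \in K -> c \notin S -> d \notin S ->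
    e x c -> e x d -> e c d.
  move=> cI dK cS dS xc xd; case: (indep_out c cI cS xc) => -> exi.
  rewrite e_sym; apply/idPn => ndi; move: dS; rewrite inE negb_and.
  rewrite (_ : d \in F) /=; last by rewrite in_setU fos_clique // ndi.
  by rewrite /shell_rank dK xK exi (negbTE ndi).
rewrite /simplicial_in xS; apply/forallP=> a; apply/forallP=> b.
apply/implyP=> /andP[/andP[/andP[/andP[aS bS] xa] xb] ab].
case: (boolP (a \in K)) => aK; case: (boolP (b \in K)) => bK.
- exact: clique_edge.
- by rewrite e_sym; apply: mixed.
- exact: mixed.
- move: ab; case: (indep_out a aK aS xa) (indep_out b bK bS xb) => -> _ [-> _].
  by rewrite eqxx.
Qed.

Lemma filter_Fam : H :&: K != set0 -> Fam e i F.
Proof.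
case/set0Pn=> k /setIP[kH kK]; split.
  by apply/feasibleP; exists shell_rank; apply: shell_rank_simplicial.
case/is_filterP: filtH => /subsetP/(_ k kH) kU _.
rewrite /nbh inE self_notin_fos_filter; apply/existsP; exists k.
by rewrite in_setU kH orbT ufs_clique_adj.
Qed.

End Sufficiency.

End Shelling.

Theorem mainTheorem9 (T : finType) (e : rel T) (K : {set T}) :
  is_split_graph e K ->
  forall i : T, i \notin K ->
  forall F : {set T},
    Fam e i F <->
    exists H : {set T},
      [/\ is_filter e K (ufs e K i) H, H :&: K != set0 & F = fos e K i :|: H].
Proof.
move=> split i iI F; split; first exact: Fam_filter.
by case=> H [filtH HK ->]; apply: filter_Fam.
Qed.
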